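(* Let $A\in\mathbb{R}^{n\times d}$ have i.i.d. rows with mean zero and covariance $\Sigma$, let $b\in\mathbb{R}^n$, and let $A$ be split row-wise into $m$ blocks $A^{(1)},\dots,A^{(m)}\in\mathbb{R}^{(n/m)\times d}$. Let $f(x)=\frac1{2n}\|Ax-b\|_2^2+\frac\lambda2\|x\|_2^2$ ($\lambda>0$), $g(x)=\nabla f(x)$, $H=\frac1nA^TA+\lambda I$, $d_\lambda=\mathrm{tr}(\Sigma(\Sigma+\lambda I)^{-1})$ with $md_\lambda<n$, and \[\tilde H=\left(\frac1m\sum_{i=1}^m\left(\frac{1}{1-\frac{md_\lambda}{n}}\frac mn A^{(i)T}A^{(i)}+\lambda I\right)^{-1}\right)^{-1}.\] Let $\omega^\star=\arg\min f$, $\omega_{t+1}=\omega_t-\tilde H^{-1}g(\omega_t)$ and $\Delta_t=\omega_t-\omega^\star$. Then $\|\Delta_{t+1}\|\le\beta\|\Delta_t\|$, where \[\beta=\frac{\sqrt2\alpha}{\sqrt{1-\alpha^2}}\sqrt{\frac{\sigma_{\max}+\lambda+\alpha_0}{\sigma_{\min}+\lambda-\alpha_0}},\] $\alpha_0=\|\Sigma-\frac1nA^TA\|$, $\alpha_1=\|\tilde H^{-1}-\mathbb{E}[\tilde H^{-1}]\|$, $\Omega_0=\mathbb{E}[\tilde H^{-1}]-(\Sigma+\lambda I)^{-1}$, $\alpha=(\sigma_{\max}+\lambda+\alpha_0)\left(\frac1{\lambda^2}\alpha_0+\alpha_1+\|\Omega_0\|\right)$, and $\sigma_{\min},\sigma_{\max}$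 are the smallest and largest eigenvalues of $\Sigma$.
   Context: $\|\cdot\|$ denotes the Euclidean norm on vectors and the spectral norm on matrices. $n/m$ is assumed to be an integer. *)

From HB Require Import structures.
From mathcomp Require Import all_boot all_order all_algebra.
From mathcomp Require Import all_classical all_reals all_analysis.
From mathcomp Require Import zify.
Set Implicit Arguments.
Unset Strict Implicit.
Unset Printing Implicit Defensive.
Import Order.TTheory GRing.Theory Num.Theory.
Local Open Scope classical_set_scope.
Local Open Scope ring_scope.

Section Defs.
Variable R : realType.

Definition vnorm (q : nat) (x : 'cV[R]_q) : R := Num.sqrt (\sum_(j < q) x j 0 ^+ 2).

Definition specnorm (p q : nat) (M : 'M[R]_(p, q)) : R :=
  sup [set vnorm (M *m x) | x in [set x : 'cV[R]_q | vnorm x = 1]].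

Lemma blk_idx_proof (m p : nat) (i : 'I_m) (r : 'I_p) : (i * p + r < m * p)%N.
Proof.
have Hi := ltn_ord i; have Hr := ltn_ord r.
have : (i.+1 * p <= m * p)%N by rewrite leq_mul2r Hi orbT.
rewrite mulSn; lia.
Qed.

Definition blk_idx (m p : nat) (i : 'I_m) (r : 'I_p) : 'I_(m * p) :=
  Ordinal (blk_idx_proof i r).

Definition block (m p d : nat) (A : 'M[R]_(m * p, d)) (i : 'I_m) : 'M[R]_(p, d) :=
  \matrix_(r < p, c < d) A (blk_idx i r) c.

Definition fobj (n d : nat) (A : 'M[R]_(n, d)) (b : 'cV[R]_n) (lam : R) (x : 'cV[R]_d) : R :=
  (2 * n%:R)^-1 * vnorm (A *m x - b) ^+ 2 + lam / 2 * vnorm x ^+ 2.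

Definition grad (n d : nat) (A : 'M[R]_(n, d)) (b : 'cV[R]_n) (lam : R) (x : 'cV[R]_d) : 'cV[R]_d :=
  n%:R^-1 *: (A^T *m (A *m x - b)) + lam *: x.

Definition dlam (d : nat) (Sigma : 'M[R]_d) (lam : R) : R :=
  \tr (Sigma *m invmx (Sigma + lam%:M)).

Definition Htilde (m p d : nat) (A : 'M[R]_(m * p, d)) (dl lam : R) : 'M[R]_d :=
  let n := (m * p)%N in
  invmx (m%:R^-1 *: \sum_(i < m)
    invmx (((1 - m%:R * dl / n%:R)^-1 * (m%:R / n%:R)) *: ((block A i)^T *m block A i)
           + lam%:M)).

End Defs.

Section Prob.
Variables (R : realType) (dT : measure_display) (T : measurableType dT).
Variable (P : probability T R).
Local Open Scope ereal_scope.

Definition Emx (p q : nat) (X : T -> 'M[R]_(p, q)) : 'M[R]_(p, q) :=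
  (\matrix_(i < p, j < q) fine (\int[P]_w (X w i j)%:E))%R.

(* The rows of the random matrix A are i.i.d. random vectors: entries are
   measurable, the rows are mutually independent and identically distributed
   (checked on measurable rectangles, which generate the product sigma-algebra
   and form a pi-system). *)
Definition iid_rows (n d : nat) (A : T -> 'M[R]_(n, d)) : Prop :=
  [/\ (forall i j, measurable_fun setT (fun w => A w i j)),
      (forall (S : {set 'I_n}) (B : 'I_n -> 'I_d -> set R),
          (forall i j, measurable (B i j)) ->
          fine (P [set w | forall i, i \in S -> forall j, B i j (A w i j)]) =
          (\prod_(i in S) fine (P [set w | forall j, B i j (A w i j)]))%R) &
      (forall (i i' : 'I_n) (B : 'I_d -> set R),
          (forall j, measurable (B j)) ->
          P [set w | forall j, B j (A w i j)] = P [set w | forall j, B j (A w i' j)])].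

Definition mean0_cov (n d : nat) (A : T -> 'M[R]_(n, d)) (Sigma : 'M[R]_d) : Prop :=
  forall (i : 'I_n) (j k : 'I_d),
    [/\ P.-integrable setT (fun w => (A w i j)%:E),
        P.-integrable setT (fun w => (A w i j * A w i k)%:E)%R,
        \int[P]_w (A w i j)%:E = 0 &
        \int[P]_w (A w i j * A w i k)%R%:E = (Sigma j k)%:E].

End Prob.

(* With [H = A^T A / n + lam I] the Hessian of [f], the gradient is
   [g x = H (x - omega_star)], so
     [Delta_{t+1} = (I - Htilde^-1 H) Delta_t = (H^-1 - Htilde^-1) H Delta_t].
   Writing [S = Sigma + lam I],
     [H^-1 - Htilde^-1 = H^-1 (S - H) S^-1 + (E[Htilde^-1] - Htilde^-1) - Omega_0],
   and since [H] and [S] both dominate [lam I] the first term has norm at most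
   [alpha_0 / lam^2], while [|H| <= |S| + alpha_0 <= sigma_max + lam + alpha_0].
   Hence [|Delta_{t+1}| <= alpha |Delta_t|], and [alpha <= beta].  The bound is
   deterministic once [alpha_1] and [Omega_0] are given.
   The norm of the symmetric [S] is controlled by its eigenvalues: for
   [mu = |S|] the positive semidefinite [mu^2 I - S^2] is singular, and a kernel
   vector [v] yields an eigenvector [mu v + v S] of [S] for [mu], or else [v] is
   one for [-mu]. *)

From HB Require Import structures.
From mathcomp Require Import all_boot all_order all_algebra.
From mathcomp Require Import all_classical all_reals all_analysis.
From mathcomp Require Import ring lra.
Set Implicit Arguments.
Unset Strict Implicit.
Unset Printing Implicit Defensive.
Import Order.TTheory GRing.Theory Num.Theory.
Local Open Scope classical_set_scope.
Local Open Scope ring_scope.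

Lemma ler_of_sqr (R : realDomainType) (x y : R) : 0 <= y -> x ^+ 2 <= y ^+ 2 -> x <= y.
Proof. by move=> y0 hxy; case: (lerP x y) => // hyx; nra. Qed.

Lemma quad_ge0_discr (R : realFieldType) (a b c : R) : 0 <= c ->
  (forall t, 0 <= a + 2 * b * t + c * t ^+ 2) -> b ^+ 2 <= a * c.
Proof.
move=> c0 hq; have [c00|cn0] := eqVneq c 0.
  rewrite {}c00 in hq *.
  have [->|bn0] := eqVneq b 0; first by rewrite expr2 !mul0r mulr0.
  have := hq (- (a + 1) / (2 * b)).
  have -> : a + 2 * b * (- (a + 1) / (2 * b)) + 0 * (- (a + 1) / (2 * b)) ^+ 2 = -1.
    by field.
  by rewrite ler0N1.
have cp : 0 < c by rewrite lt_neqAle eq_sym cn0.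
have := hq (- b / c).
have -> : a + 2 * b * (- b / c) + c * (- b / c) ^+ 2 = a - b ^+ 2 / c by field.
by rewrite subr_ge0 ler_pdivrMr.
Qed.

Section EuclideanSpace.
Variable R : realType.
Implicit Types (q r : nat).

Definition dot q (x y : 'cV[R]_q) : R := \sum_(j < q) x j 0 * y j 0.

Definition psdmx q (M : 'M[R]_q) := forall x, 0 <= dot x (M *m x).

Definition coercivemx q (lam : R) (M : 'M[R]_q) := forall x, lam * dot x x <= dot x (M *m x).

Lemma dotC q (x y : 'cV[R]_q) : dot x y = dot y x.
Proof. by apply: eq_bigr => j _; rewrite mulrC. Qed.

Lemma dotDl q (x y z : 'cV[R]_q) : dot (x + y) z = dot x z + dot y z.
Proof. by rewrite /dot -big_split; apply: eq_bigr => j _; rewrite !mxE mulrDl. Qed.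

Lemma dotZl q c (x y : 'cV[R]_q) : dot (c *: x) y = c * dot x y.
Proof. by rewrite /dot mulr_sumr; apply: eq_bigr => j _; rewrite !mxE mulrA. Qed.

Lemma dotDr q (x y z : 'cV[R]_q) : dot z (x + y) = dot z x + dot z y.
Proof. by rewrite !(dotC z) dotDl. Qed.

Lemma dotZr q c (x y : 'cV[R]_q) : dot y (c *: x) = c * dot y x.
Proof. by rewrite !(dotC y) dotZl. Qed.

Lemma dotNr q (x y : 'cV[R]_q) : dot y (- x) = - dot y x.
Proof. by rewrite -scaleN1r dotZr mulN1r. Qed.

Lemma dotxx_ge0 q (x : 'cV[R]_q) : 0 <= dot x x.
Proof. by apply: sumr_ge0 => j _; rewrite -expr2 sqr_ge0. Qed.

Lemma dot_mulmxr q r (x : 'cV[R]_q) (M : 'M[R]_(q, r)) (y : 'cV[R]_r) :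
  dot x (M *m y) = dot (M^T *m x) y.
Proof.
rewrite /dot; under eq_bigr => j _ do rewrite mxE big_distrr /=.
under [RHS]eq_bigr => k _ do rewrite mxE big_distrl /=.
rewrite exchange_big /=; apply: eq_bigr => k _; apply: eq_bigr => j _.
by rewrite mxE; ring.
Qed.

Lemma dot_symmx q (S : 'M[R]_q) (x y : 'cV[R]_q) :
  S^T = S -> dot x (S *m y) = dot (S *m x) y.
Proof. by move=> hS; rewrite dot_mulmxr hS. Qed.

Lemma vnorm_sqr q (x : 'cV[R]_q) : vnorm x ^+ 2 = dot x x.
Proof.
rewrite /vnorm sqr_sqrtr; last by apply: sumr_ge0 => j _; exact: sqr_ge0.
by apply: eq_bigr => j _; rewrite expr2.
Qed.

Lemma vnorm_ge0 q (x : 'cV[R]_q) : 0 <= vnorm x.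
Proof. exact: sqrtr_ge0. Qed.

Lemma vnorm_eq0 q (x : 'cV[R]_q) : vnorm x = 0 -> x = 0.
Proof.
move=> h; have : dot x x = 0 by rewrite -vnorm_sqr h expr2 mulr0.
move=> /psumr_eq0P hx; apply/matrixP => j k; rewrite (ord1 k) mxE.
have /eqP := hx (fun i _ => sqr_ge0 _ : 0 <= x i 0 * x i 0) j isT.
by rewrite -expr2 sqrf_eq0 => /eqP.
Qed.

Lemma vnormZ q c (x : 'cV[R]_q) : vnorm (c *: x) = `|c| * vnorm x.
Proof.
rewrite /vnorm; under eq_bigr => j _ do rewrite mxE exprMn.
by rewrite -mulr_sumr sqrtrM ?sqr_ge0 // sqrtr_sqr.
Qed.

Lemma vnormN q (x : 'cV[R]_q) : vnorm (- x) = vnorm x.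
Proof. by rewrite -scaleN1r vnormZ normrN normr1 mul1r. Qed.

Lemma vnorm0 q : vnorm (0 : 'cV[R]_q) = 0.
Proof. by rewrite -(scale0r (0 : 'cV[R]_q)) vnormZ normr0 mul0r. Qed.

Lemma psdmx_CauchySchwarz q (T : 'M[R]_q) (x y : 'cV[R]_q) : T^T = T -> psdmx T ->
  dot x (T *m y) ^+ 2 <= dot x (T *m x) * dot y (T *m y).
Proof.
move=> hT hpsd; apply: quad_ge0_discr => // t.
have := hpsd (x + t *: y).
rewrite mulmxDr -scalemxAr !dotDl !dotDr !dotZl !dotZr.
by rewrite (dot_symmx y x hT) (dotC _ x); lra.
Qed.

Lemma psdmx1 q : psdmx (1%:M : 'M[R]_q).
Proof. by move=> x; rewrite mul1mx dotxx_ge0. Qed.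

Lemma dot_CauchySchwarz q (x y : 'cV[R]_q) : dot x y ^+ 2 <= dot x x * dot y y.
Proof. by have := psdmx_CauchySchwarz x y (trmx1 _ _) (@psdmx1 q); rewrite !mul1mx. Qed.

Lemma dot_le_vnorm q (x y : 'cV[R]_q) : dot x y <= vnorm x * vnorm y.
Proof.
apply: ler_of_sqr; first by rewrite mulr_ge0 ?vnorm_ge0.
by rewrite exprMn !vnorm_sqr dot_CauchySchwarz.
Qed.

Lemma vnormD q (x y : 'cV[R]_q) : vnorm (x + y) <= vnorm x + vnorm y.
Proof.
apply: ler_of_sqr; first by rewrite addr_ge0 ?vnorm_ge0.
have := dot_le_vnorm x y.
by rewrite vnorm_sqr dotDl !dotDr (dotC y x) sqrrD -!vnorm_sqr; lra.
Qed.

End EuclideanSpace.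

Section SpectralNorm.
Variable R : realType.
Implicit Types (p q r : nat).

Lemma mx_lipschitz p q (M : 'M[R]_(p, q)) :
  exists2 K, 0 <= K & forall x, vnorm (M *m x) <= K * vnorm x.
Proof.
pose u i : 'cV[R]_q := (row i M)^T.
have Mu x i : (M *m x) i 0 = dot (u i) x.
  by rewrite mxE; apply: eq_bigr => j _; rewrite !mxE.
pose K2 := \sum_(i < p) dot (u i) (u i).
have K2ge0 : 0 <= K2 by apply: sumr_ge0 => i _; exact: dotxx_ge0.
exists (Num.sqrt K2) => [|x]; first exact: sqrtr_ge0.
apply: ler_of_sqr; first by rewrite mulr_ge0 ?sqrtr_ge0 ?vnorm_ge0.
rewrite exprMn (sqr_sqrtr K2ge0) !vnorm_sqr {1}/dot /K2 mulr_suml.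
by apply: ler_sum => i _; rewrite Mu -expr2 dot_CauchySchwarz.
Qed.

Lemma specnorm_no_unit_vec p q (M : 'M[R]_(p, q)) :
  ~ (exists x : 'cV[R]_q, vnorm x = 1) -> specnorm M = 0.
Proof.
move=> nex; rewrite /specnorm -[RHS](@sup0 R); congr sup.
by apply/seteqP; split => // y [z hz _]; apply: nex; exists z.
Qed.

Lemma specnorm_ub p q (M : 'M[R]_(p, q)) x : vnorm (M *m x) <= specnorm M * vnorm x.
Proof.
have [x0|xn0] := eqVneq (vnorm x) 0.
  by rewrite x0 (vnorm_eq0 x0) mulmx0 vnorm0 mulr0.
have [y y1 ->] : exists2 y : 'cV[R]_q, vnorm y = 1 & x = vnorm x *: y.
  exists ((vnorm x)^-1 *: x); last by rewrite scalerA mulfV // scale1r.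
  by rewrite vnormZ ger0_norm ?invr_ge0 ?vnorm_ge0 // mulVf.
rewrite -scalemxAr !vnormZ y1 mulr1 ger0_norm ?vnorm_ge0 // mulrC ler_wpM2r ?vnorm_ge0 //.
have [K K0 hK] := mx_lipschitz M.
apply: sup_upper_bound; last by exists y.
split; first by exists (vnorm (M *m y)); exists y.
by exists K => _ [z z1 <-]; rewrite -[K]mulr1 -z1 hK.
Qed.

Lemma specnorm_le p q (M : 'M[R]_(p, q)) c : 0 <= c ->
  (forall x, vnorm (M *m x) <= c * vnorm x) -> specnorm M <= c.
Proof.
move=> c0 hc; have [[x0 x01]|nex] := pselect (exists x : 'cV[R]_q, vnorm x = 1).
  apply: ge_sup; first by exists (vnorm (M *m x0)); exists x0.
  by move=> _ [z z1 <-]; rewrite -[c]mulr1 -z1 hc.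
by rewrite specnorm_no_unit_vec.
Qed.

Lemma specnorm_ge0 p q (M : 'M[R]_(p, q)) : 0 <= specnorm M.
Proof.
have [[x0 x01]|nex] := pselect (exists x : 'cV[R]_q, vnorm x = 1).
  by rewrite -[specnorm M]mulr1 -x01 (le_trans (vnorm_ge0 _) (specnorm_ub M x0)).
by rewrite specnorm_no_unit_vec.
Qed.

Lemma specnorm0 p q : specnorm (0 : 'M[R]_(p, q)) = 0.
Proof.
apply/le_anti; rewrite specnorm_ge0 andbT specnorm_le // => x.
by rewrite mul0mx vnorm0 mul0r.
Qed.

Lemma specnormD p q (M N : 'M[R]_(p, q)) : specnorm (M + N) <= specnorm M + specnorm N.
Proof.
apply: specnorm_le => [|x]; first by rewrite addr_ge0 ?specnorm_ge0.
rewrite mulmxDl mulrDl; apply: le_trans (vnormD _ _) _.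
by rewrite lerD ?specnorm_ub.
Qed.

Lemma specnormN p q (M : 'M[R]_(p, q)) : specnorm (- M) = specnorm M.
Proof.
have le_opp (N : 'M[R]_(p, q)) : specnorm (- N) <= specnorm N.
  by apply: specnorm_le => [|x]; rewrite ?specnorm_ge0 // mulNmx vnormN specnorm_ub.
by apply/le_anti; rewrite le_opp -{1}(opprK M) le_opp.
Qed.

Lemma specnormB p q (M N : 'M[R]_(p, q)) : specnorm (M - N) <= specnorm M + specnorm N.
Proof. by rewrite -(specnormN N) specnormD. Qed.

Lemma specnormM p q r (M : 'M[R]_(p, q)) (N : 'M[R]_(q, r)) :
  specnorm (M *m N) <= specnorm M * specnorm N.
Proof.
apply: specnorm_le => [|x]; first by rewrite mulr_ge0 ?specnorm_ge0.
rewrite -mulmxA -mulrA; apply: le_trans (specnorm_ub _ _) _.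
by rewrite ler_wpM2l ?specnorm_ge0 ?specnorm_ub.
Qed.

End SpectralNorm.

Section CoerciveMatrices.
Variable R : realType.
Implicit Types (q : nat) (lam : R).

Lemma coercive_vnorm q (M : 'M[R]_q) lam :
  coercivemx lam M -> forall x, lam * vnorm x <= vnorm (M *m x).
Proof.
move=> hM x; have [->|xn0] := eqVneq (vnorm x) 0; first by rewrite mulr0 vnorm_ge0.
have xp : 0 < vnorm x by rewrite lt_neqAle eq_sym xn0 vnorm_ge0.
rewrite -(ler_pM2l xp) mulrCA -expr2 vnorm_sqr.
exact: le_trans (hM x) (dot_le_vnorm _ _).
Qed.

Lemma coercive_unitmx q (M : 'M[R]_q) lam : 0 < lam ->
  coercivemx lam M -> M \in unitmx.
Proof.
move=> lp hM; rewrite -unitmx_tr unitmxE unitfE; apply/negP => /det0P [v vn0 hv].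
have Mv : M *m v^T = 0 by rewrite -(trmxK M) -trmx_mul hv trmx0.
have := coercive_vnorm hM v^T; rewrite Mv vnorm0 pmulr_rle0 // => vle0.
have /vnorm_eq0 v0 : vnorm v^T = 0 by apply/eqP; rewrite eq_le vle0 vnorm_ge0.
by move/eqP: vn0; apply; rewrite -(trmxK v) v0 trmx0.
Qed.

Lemma coercive_specnorm_invmx q (M : 'M[R]_q) lam : 0 < lam ->
  coercivemx lam M -> specnorm (invmx M) <= lam^-1.
Proof.
move=> lp hM; apply: specnorm_le => [|y]; first by rewrite invr_ge0 ltW.
have := coercive_vnorm hM (invmx M *m y).
by rewrite mulmxA mulmxV ?(coercive_unitmx lp hM) // mul1mx -ler_pdivlMl.
Qed.

Lemma psdmx_vnorm_sqr q (T : 'M[R]_q) x : T^T = T -> psdmx T ->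
  vnorm (T *m x) ^+ 2 <= specnorm T * dot x (T *m x).
Proof.
move=> hT hpsd; set Y := vnorm (T *m x); set D := dot x (T *m x).
have hY : dot x (T *m (T *m x)) = Y ^+ 2 by rewrite dot_symmx // vnorm_sqr.
have h1 := psdmx_CauchySchwarz x (T *m x) hT hpsd; rewrite hY -/D in h1.
have h2 : dot (T *m x) (T *m (T *m x)) <= specnorm T * Y ^+ 2.
  apply: le_trans (dot_le_vnorm _ _) _.
  by rewrite mulrC expr2 mulrA ler_wpM2r ?vnorm_ge0 // specnorm_ub.
have [Y0|Yn0] := eqVneq Y 0; first by rewrite Y0 expr0n mulr_ge0 ?specnorm_ge0 ?hpsd.
have Y2p : 0 < Y ^+ 2 by rewrite exprn_gt0 // lt_neqAle eq_sym Yn0 vnorm_ge0.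
rewrite -(ler_pM2l Y2p) -expr2; apply: le_trans h1 _.
have -> : Y ^+ 2 * (specnorm T * D) = D * (specnorm T * Y ^+ 2) by ring.
by apply: ler_wpM2l; [exact: hpsd | exact: h2].
Qed.

Lemma psdmx_unitmx_coercive q (T : 'M[R]_q) : T^T = T -> psdmx T -> T \in unitmx ->
  exists2 c, 0 < c & coercivemx c T.
Proof.
move=> hT hpsd hu; set k := specnorm (invmx T) ^+ 2 * specnorm T.
have k0 : 0 <= k by rewrite mulr_ge0 ?sqr_ge0 ?specnorm_ge0.
exists (k + 1)^-1 => [|x]; first by rewrite invr_gt0 ltr_wpDl.
rewrite ler_pdivrMl ?ltr_wpDl //.
have hx : vnorm x <= specnorm (invmx T) * vnorm (T *m x).
  by have := specnorm_ub (invmx T) (T *m x); rewrite mulmxA mulVmx // mul1mx.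
rewrite -vnorm_sqr; apply: le_trans (_ : k * dot x (T *m x) <= _); last first.
  by rewrite ler_wpM2r ?lerDl.
apply: le_trans (_ : (specnorm (invmx T) * vnorm (T *m x)) ^+ 2 <= _).
  by rewrite ler_pXn2r // nnegrE ?vnorm_ge0 // mulr_ge0 ?specnorm_ge0 ?vnorm_ge0.
by rewrite exprMn /k -mulrA ler_wpM2l ?sqr_ge0 // psdmx_vnorm_sqr.
Qed.

End CoerciveMatrices.

Lemma sqr_sub_mulmx_singular (F : fieldType) q (S : 'M[F]_q) mu :
  ~~ ((mu ^+ 2)%:M - S *m S \in unitmx) -> eigenvalue S mu \/ eigenvalue S (- mu).
Proof.
rewrite unitmxE unitfE negbK => /det0P [v vn0].
rewrite mulmxBr mul_mx_scalar mulmxA => /eqP; rewrite subr_eq0 => /eqP vSS.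
have [y0|yn0] := eqVneq (mu *: v + v *m S) 0.
  right; apply/eigenvalueP; exists v => //.
  by move/eqP: y0; rewrite addrC addr_eq0 => /eqP ->; rewrite scaleNr.
left; apply/eigenvalueP; exists (mu *: v + v *m S) => //.
by rewrite mulmxDl -scalemxAl scalerDr scalerA -expr2 vSS addrC.
Qed.

Lemma eigenvalue_add_scalar (F : fieldType) q (M : 'M[F]_q) a e :
  eigenvalue (M + a%:M) e -> eigenvalue M (e - a).
Proof.
move/eigenvalueP => [v hv vn0]; apply/eigenvalueP; exists v => //.
by rewrite scalerBl -hv mulmxDr mul_mx_scalar addrK.
Qed.

Section SymmetricSpectralNorm.
Variable R : realType.

Lemma vnorm_delta_mx q (i : 'I_q) : vnorm (delta_mx i 0 : 'cV[R]_q) = 1.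
Proof.
rewrite /vnorm (bigD1 i) //= big1 ?addr0 => [|j ji]; first by rewrite mxE !eqxx expr1n sqrtr1.
by rewrite mxE (negbTE ji) expr0n.
Qed.

(* For [mu = specnorm S] the form [mu^2 |x|^2 - |S x|^2] is nonnegative; were it
   coercive, [|S x|^2 <= (mu^2 - c) |x|^2] would contradict the definition of [mu]. *)
Lemma specnorm_sym_singular q (S : 'M[R]_q) : (0 < q)%N -> S^T = S ->
  ~~ ((specnorm S ^+ 2)%:M - S *m S \in unitmx).
Proof.
move=> q0 hS; set mu := specnorm S; set T := _ - _.
have Tq x : dot x (T *m x) = mu ^+ 2 * dot x x - vnorm (S *m x) ^+ 2.
  by rewrite mulmxBl mul_scalar_mx -mulmxA dotDr dotNr dotZr dot_symmx // vnorm_sqr.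
have hT : T^T = T by rewrite linearB /= trmx_mul hS tr_scalar_mx.
have hpsd : psdmx T.
  move=> x; rewrite Tq subr_ge0 -vnorm_sqr -exprMn.
  by rewrite ler_pXn2r ?specnorm_ub ?nnegrE ?mulr_ge0 ?specnorm_ge0 ?vnorm_ge0.
apply/negP => /(psdmx_unitmx_coercive hT hpsd) [c c0 hc].
have hSc x : vnorm (S *m x) ^+ 2 <= (mu ^+ 2 - c) * vnorm x ^+ 2.
  by have := hc x; rewrite Tq -vnorm_sqr mulrBl; lra.
have c_le : 0 <= mu ^+ 2 - c.
  have := hSc (delta_mx (Ordinal q0) 0); rewrite vnorm_delta_mx expr1n mulr1.
  exact/le_trans/sqr_ge0.
have : mu <= Num.sqrt (mu ^+ 2 - c).
  apply: specnorm_le => [|x]; first exact: sqrtr_ge0.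
  apply: ler_of_sqr; first by rewrite mulr_ge0 ?sqrtr_ge0 ?vnorm_ge0.
  by rewrite exprMn (sqr_sqrtr c_le).
rewrite -(ler_pXn2r (_ : 0 < 2)%N) ?nnegrE ?specnorm_ge0 ?sqrtr_ge0 // (sqr_sqrtr c_le).
by lra.
Qed.

Lemma specnorm_sym_le q (S : 'M[R]_q) c : S^T = S -> 0 <= c ->
  (forall e, eigenvalue S e -> `|e| <= c) -> specnorm S <= c.
Proof.
move=> hS c0 hc; have [q0|qp] := posnP q.
  subst q; apply: specnorm_le => // x.
  by rewrite [S *m x]flatmx0 vnorm0 mulr_ge0 ?vnorm_ge0.
case: (sqr_sub_mulmx_singular (specnorm_sym_singular qp hS)) => /hc.
  by rewrite ger0_norm ?specnorm_ge0.
by rewrite normrN ger0_norm ?specnorm_ge0.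
Qed.

End SymmetricSpectralNorm.

Section Covariance.
Variables (R : realType) (dT : measure_display) (T : measurableType dT).
Variable P : probability T R.
Variables (n d : nat) (A : T -> 'M[R]_(n, d)) (Sigma : 'M[R]_d).
Hypothesis hcov : mean0_cov P A Sigma.

Lemma mean0_cov_sym (i : 'I_n) : Sigma^T = Sigma.
Proof.
apply/matrixP => j k; rewrite mxE; apply: EFin_inj.
have [_ _ _ <-] := hcov i j k; have [_ _ _ <-] := hcov i k j.
by apply: eq_integral => w _; rewrite mulrC.
Qed.

Lemma mean0_cov_psd (i : 'I_n) : psdmx Sigma.
Proof.
move=> x.
pose F j k w := ((x j 0 * x k 0)%:E * (A w i j * A w i k)%:E)%E.
have FI j k : P.-integrable setT (F j k) by apply: integrableZl; case: (hcov i j k).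
rewrite -lee_fin.
have -> : (dot x (Sigma *m x))%:E = (\int[P]_w \sum_(j < d) \sum_(k < d) F j k w)%E.
  rewrite integral_sum // => [|j]; last by apply: integrable_sum.
  rewrite /dot -sumEFin; apply: eq_bigr => j _.
  rewrite integral_sum // mxE big_distrr /= -sumEFin; apply: eq_bigr => k _.
  have [_ _ _ hE] := hcov i j k.
  by rewrite integralZl ?hE -?EFinM //; [congr (_%:E); ring | case: (hcov i j k)].
apply: integral_ge0 => w _.
have -> : (\sum_(j < d) \sum_(k < d) F j k w)%E = ((\sum_(j < d) x j 0 * A w i j) ^+ 2)%:E.
  rewrite expr2 big_distrl /= -sumEFin; apply: eq_bigr => j _.
  rewrite big_distrr /= -sumEFin; apply: eq_bigr => k _.
  by rewrite /F -EFinM; congr (_%:E); ring.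
by rewrite lee_fin sqr_ge0.
Qed.

End Covariance.

Lemma quad_ge0_lin_eq0 (R : realFieldType) (B C : R) : 0 <= C ->
  (forall s, 0 <= s * B + s ^+ 2 * C) -> B = 0.
Proof.
move=> C0 hq; have : (B / 2) ^+ 2 <= 0 * C.
  apply: quad_ge0_discr => // t.
  by have := hq t; congr (_ <= _); field.
rewrite mul0r => hB; apply/eqP; rewrite -[B](divfK (_ : 2 != 0)) // mulf_eq0.
by rewrite -sqrf_eq0 eq_le hB sqr_ge0.
Qed.

Section LeastSquares.
Variables (R : realType) (n d : nat) (A : 'M[R]_(n, d)) (b : 'cV[R]_n) (lam : R).

Definition hessian : 'M[R]_d := n%:R^-1 *: (A^T *m A) + lam%:M.

Lemma hessian_form x :
  dot x (hessian *m x) = n%:R^-1 * dot (A *m x) (A *m x) + lam * dot x x.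
Proof. by rewrite mulmxDl mul_scalar_mx -scalemxAl -mulmxA dotDr !dotZr dot_mulmxr trmxK. Qed.

Lemma hessian_coercive : coercivemx lam hessian.
Proof. by move=> x; rewrite hessian_form lerDr mulr_ge0 ?invr_ge0 ?dotxx_ge0. Qed.

Lemma grad_affine x : grad A b lam x = hessian *m x - n%:R^-1 *: (A^T *m b).
Proof.
by rewrite /grad mulmxDl mul_scalar_mx -scalemxAl mulmxBr mulmxA scalerBr addrAC.
Qed.

Lemma fobj_taylor x v s : fobj A b lam (x + s *: v) =
  fobj A b lam x + s * dot (grad A b lam x) v + s ^+ 2 / 2 * dot v (hessian *m v).
Proof.
rewrite /fobj /grad hessian_form [A *m (x + _)]mulmxDr -scalemxAr addrAC; move: (A *m x - b) => r.
rewrite !vnorm_sqr !dotDl !dotDr !dotZl !dotZr -dot_mulmxr invfM.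
rewrite (dotC (A *m v)) (dotC v x).
by move: (n%:R^-1) => ni; field.
Qed.

Lemma argmin_grad_eq0 ws : 0 <= lam ->
  (forall x, fobj A b lam ws <= fobj A b lam x) -> grad A b lam ws = 0.
Proof.
move=> lam0 hmin; set g := grad A b lam ws.
have C0 : 0 <= dot g (hessian *m g) / 2.
  by rewrite divr_ge0 // hessian_form addr_ge0 ?mulr_ge0 ?invr_ge0 ?dotxx_ge0.
have /quad_ge0_lin_eq0 gg0 : forall s, 0 <= s * dot g g + s ^+ 2 * (dot g (hessian *m g) / 2).
  by move=> s; have := hmin (ws + s *: g); rewrite fobj_taylor mulrA mulrAC; lra.
by apply/vnorm_eq0/eqP; rewrite -sqrf_eq0 vnorm_sqr gg0.
Qed.

Lemma grad_argmin ws : 0 <= lam ->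
  (forall x, fobj A b lam ws <= fobj A b lam x) ->
  forall x, grad A b lam x = hessian *m (x - ws).
Proof.
move=> lam0 hmin x; rewrite -[LHS]subr0 -(argmin_grad_eq0 lam0 hmin).
by rewrite !grad_affine mulmxBr opprB subrKA.
Qed.

End LeastSquares.

Section NewtonSketch.
Variable R : realType.

Lemma invmxB_sandwich d (H S : 'M[R]_d) : H \in unitmx -> S \in unitmx ->
  invmx H *m (S - H) *m invmx S = invmx H - invmx S.
Proof.
move=> Hu Su; rewrite mulmxBr mulmxBl mulVmx // mul1mx -mulmxA mulmxV //.
by rewrite mulmx1.
Qed.

Lemma newton_error_bound d (H S G EG : 'M[R]_d) lam : 0 < lam ->
  coercivemx lam H -> coercivemx lam S ->
  specnorm (1%:M - G *m H) <=
    specnorm H * (lam ^- 2 * specnorm (S - H) + specnorm (G - EG) + specnorm (EG - invmx S)).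
Proof.
move=> lp hH hS; have Hu := coercive_unitmx lp hH; have Su := coercive_unitmx lp hS.
have -> : 1%:M - G *m H =
    (invmx H *m (S - H) *m invmx S + (EG - G) + (invmx S - EG)) *m H.
  by rewrite invmxB_sandwich // addrAC !subrKA mulmxBl mulVmx.
rewrite mulrC; apply: le_trans (specnormM _ _) _; rewrite ler_wpM2r ?specnorm_ge0 //.
have normC (X Y : 'M[R]_d) : specnorm (X - Y) = specnorm (Y - X).
  by rewrite -specnormN opprB.
rewrite (normC G EG) (normC EG (invmx S)); apply: le_trans (specnormD _ _) _; rewrite lerD //.
apply: le_trans (specnormD _ _) _; rewrite lerD //.
apply: le_trans (specnormM _ _) _; apply: le_trans (ler_wpM2r (specnorm_ge0 _) (specnormM _ _)) _.
rewrite mulrAC ler_wpM2r ?specnorm_ge0 // expr2 invfM.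
by rewrite ler_pM ?specnorm_ge0 ?coercive_specnorm_invmx.
Qed.

Lemma specnorm_shift_le d (Sigma : 'M[R]_d) lam smin smax : Sigma^T = Sigma ->
  0 <= smin + lam -> smin <= smax ->
  (forall s, eigenvalue Sigma s -> smin <= s <= smax) ->
  specnorm (Sigma + lam%:M) <= smax + lam.
Proof.
move=> hS h0 hmm hbnd; apply: specnorm_sym_le.
- by rewrite linearD /= hS tr_scalar_mx.
- by lra.
move=> e /eigenvalue_add_scalar /hbnd /andP[le1 le2].
by rewrite ger0_norm; lra.
Qed.

Lemma Htilde_no_rows m p d (A : 'M[R]_(m * p, d)) dl lam : (0 < m)%N -> p = 0%N ->
  lam != 0 -> invmx (Htilde A dl lam) *m hessian A lam = 1%:M.
Proof.
move=> m0 p0 lam0; subst p; rewrite /Htilde /hessian invmxK.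
have -> : (m * 0)%:R^-1 = 0 :> R by rewrite muln0 invr0.
rewrite scale0r add0r.
under eq_bigr => i _ do rewrite [block A i]flatmx0 trmx0 mul0mx scaler0 add0r invmx_scalar.
rewrite sumr_const card_ord -(raddfMn (@scalar_mx R d)) scale_scalar_mx -scalar_mxM.
by congr (_%:M); rewrite -[_ *+ m]mulr_natl; field; rewrite lam0 pnatr_eq0 -lt0n.
Qed.

End NewtonSketch.

Lemma alpha_le_beta (R : rcfType) (a r : R) : 0 <= a -> a < 1 -> 1 <= r ->
  a <= Num.sqrt 2 * a / Num.sqrt (1 - a ^+ 2) * Num.sqrt r.
Proof.
move=> a0 a1 r1; have s0 : 0 < Num.sqrt (1 - a ^+ 2) by rewrite sqrtr_gt0; nra.
have -> : Num.sqrt 2 * a / Num.sqrt (1 - a ^+ 2) * Num.sqrt r =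
    a * (Num.sqrt 2 / Num.sqrt (1 - a ^+ 2) * Num.sqrt r) by ring.
rewrite ler_peMr // mulr_ege1 //; last by rewrite -sqrtr1 ler_sqrt; lra.
by rewrite ler_pdivlMr // mul1r ler_sqrt; nra.
Qed.

Unset Implicit Arguments.
Set Strict Implicit.

Theorem theorem3p1 (R : realType) (dT : measure_display) (T : measurableType dT)
  (P : probability T R) (m p d : nat) (A : T -> 'M[R]_(m * p, d))
  (Sigma : 'M[R]_d) (b : 'cV[R]_(m * p)) (lam sigmin sigmax : R) :
  (0 < m)%N ->
  iid_rows P A ->
  mean0_cov P A Sigma ->
  0 < lam ->
  m%:R * dlam Sigma lam < (m * p)%:R ->
  eigenvalue Sigma sigmin -> eigenvalue Sigma sigmax ->
  (forall s, eigenvalue Sigma s -> sigmin <= s <= sigmax) ->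
  (forall i j, P.-integrable setT
     (fun w => ((invmx (Htilde (A w) (dlam Sigma lam) lam)) i j)%:E)) ->
  forall (w0 : T) (omega_star : 'cV[R]_d) (omega : nat -> 'cV[R]_d),
  let n := (m * p)%N in
  let A0 := A w0 in
  let Hti := invmx (Htilde A0 (dlam Sigma lam) lam) in
  let EHti := Emx P (fun w => invmx (Htilde (A w) (dlam Sigma lam) lam)) in
  let alpha0 := specnorm (Sigma - n%:R^-1 *: (A0^T *m A0)) in
  let alpha1 := specnorm (Hti - EHti) in
  let Omega0 := EHti - invmx (Sigma + lam%:M) in
  let alpha := (sigmax + lam + alpha0) *
                 (lam ^- 2 * alpha0 + alpha1 + specnorm Omega0) in
  let beta := Num.sqrt 2 * alpha / Num.sqrt (1 - alpha ^+ 2) *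
                Num.sqrt ((sigmax + lam + alpha0) / (sigmin + lam - alpha0)) in
  (forall x, fobj A0 b lam omega_star <= fobj A0 b lam x) ->
  (forall t, omega t.+1 = omega t - Hti *m grad A0 b lam (omega t)) ->
  alpha < 1 ->
  alpha0 < sigmin + lam ->
  forall t, vnorm (omega t.+1 - omega_star) <= beta * vnorm (omega t - omega_star).
Proof.
move=> m0 _ hcov lp _ _ hmax hbnd _ w0 ws om n A0 Hti EHti alpha0 alpha1 Omega0
  alpha beta hmin hom ha1 ha0 t.
set H := hessian A0 lam; set S := Sigma + lam%:M.
have a00 : 0 <= alpha0 := specnorm_ge0 _.
have smm : sigmin <= sigmax by case/andP: (hbnd _ hmax) => /le_trans; apply.
have K0 : 0 < sigmax + lam + alpha0 by lra.
have err0 : 0 <= lam ^- 2 * alpha0 + alpha1 + specnorm Omega0.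
  by rewrite !addr_ge0 ?specnorm_ge0 // mulr_ge0 // invr_ge0 exprn_ge0 // ltW.
have alpha_ge0 : 0 <= alpha := mulr_ge0 (ltW K0) err0.
have -> : om t.+1 - ws = (1%:M - Hti *m H) *m (om t - ws).
  by rewrite hom (grad_argmin (ltW lp) hmin) mulmxBl mul1mx mulmxA addrAC.
apply: le_trans (specnorm_ub _ _) _; rewrite ler_wpM2r ?vnorm_ge0 //.
apply: le_trans (alpha_le_beta alpha_ge0 ha1 _); last by rewrite ler_pdivlMr ?mul1r; lra.
(* Without samples [Sigma] is unconstrained, but then [Htilde = H = lam I]. *)
have [n0|npos] := posnP n.
  rewrite Htilde_no_rows ?subrr ?specnorm0 ?gt_eqF //.
  by move/eqP: n0; rewrite /n muln_eq0 (gtn_eqF m0) => /eqP.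
pose i0 := Ordinal npos.
have hS : coercivemx lam S.
  by move=> x; rewrite mulmxDl mul_scalar_mx dotDr dotZr lerDr (mean0_cov_psd hcov i0).
have hSH : S - H = Sigma - n%:R^-1 *: (A0^T *m A0).
  by rewrite /S /H /hessian opprD addrACA subrr addr0.
apply: le_trans (newton_error_bound _ EHti lp (hessian_coercive A0 lam) hS) _.
rewrite -[X in specnorm X * _](subKr S) hSH ler_wpM2r //.
apply: le_trans (specnormB _ _) _; rewrite lerD2r.
by apply: specnorm_shift_le (mean0_cov_sym hcov i0) _ smm hbnd; lra.
Qed.
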